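(* Let $n\geqslant 3$. Any eigenfunction of the Star graph $S_n$ with eigenvalue $n-2$ can be uniquely reconstructed from its values on the second neighbourhood of any vertex: if $f,g$ are eigenfunctions of $S_n$ with eigenvalue $n-2$, $v$ is a vertex of $S_n$, and $f(x)=g(x)$ for every vertex $x$ at distance exactly $2$ from $v$, then $f=g$.
   Context: Write a permutation $\pi$ of $\{1,\ldots,n\}$ as the sequence $[\pi_1\ldots\pi_n]$. The Star graph $S_n$ has vertex set $\mathrm{Sym}_n$, and two permutations are adjacent iff one is obtained from the other by exchanging the entries in positions $1$ and $i$ for some $2\le i\le n$ (the Cayley graph of $\mathrm{Sym}_n$ generated by the transpositions $(1\ i)$, $2\le i\le n$). A function $f:\mathrm{Sym}_n\to\mathbb{R}$ is an eigenfunction with eigenvalue $\theta$ if $f\not\equiv 0$ and $\theta f(x)=\sum_{y\in N(x)}f(y)$ for every vertex $x$, where $N(x)$ is the neighbourhood of $x$. The second neighbourhood of a vertex $v$ is the set of vertices at distance exactly $2$ from $v$. *)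

From mathcomp Require Import all_boot all_order all_algebra all_fingroup.
From mathcomp Require Import all_classical all_reals.
Set Implicit Arguments. Unset Strict Implicit. Unset Printing Implicit Defensive.
Import GRing.Theory Num.Theory.
Local Open Scope ring_scope.

(* A permutation pi of {1..n} is modelled as pi : 'S_n = {perm 'I_n}, with
   pi i = entry in position i (positions 0-indexed: position 1 of the paper is 0).
   Exchanging the entries in positions 1 and i gives pi o (1 i); in MathComp
   (s * t) x = t (s x), so pi o tau = tau * pi. *)
Definition star_adj (n : nat) (x y : 'S_n) : Prop :=
  exists i j : 'I_n, nat_of_ord i = 0%N /\ i != j /\ y = (tperm i j * x)%g.

Definition star_eigenfunction (R : realType) (n : nat) (theta : R)
    (f : 'S_n -> R) : Prop :=
  (exists x, f x != 0) /\
  forall x : 'S_n,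
    theta * f x = \sum_(y : 'S_n | `[< star_adj x y >]) f y.

Definition star_dist2 (n : nat) (v x : 'S_n) : Prop :=
  x <> v /\ ~ star_adj v x /\ exists w, star_adj v w /\ star_adj w x.

(* The difference h = f - g satisfies the eigen-equation for
   theta = n - 2 and vanishes on the second neighbourhood of v.

   Every theta-eigenfunction h is first order, h x = sum_p M p (x p): the
   first-order function with the same marginals sum_(x p = a) h x is again an
   eigenfunction, and an eigenfunction with vanishing marginals is zero.  For
   the latter, summing the eigen-equations over a coset {y | y = x on P} relates
   coset sums for P to coset sums for P with the first position added or
   removed; by induction on #|P| and a maximum principle (an equation
   c psi x = sum of fewer than c values of psi forces psi = 0) all coset sums
   vanish, and for #|P| = n - 1 a coset is a single permutation.

   The eigen-equations at v and at its neighbours give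
   (theta^2 - (n - 1)) h v = 0, and theta^2 <> n - 1 for integers, so h also
   vanishes at v and at its neighbours.  Finally, a first-order function
   vanishing on the ball of radius 2 around v vanishes identically: these
   values force M p (v b) - M p (v p) to be independent of p. *)

From mathcomp Require Import all_boot all_order all_algebra all_fingroup.
From mathcomp Require Import all_classical all_reals.
From mathcomp Require Import ring lra zify.
Set Implicit Arguments. Unset Strict Implicit. Unset Printing Implicit Defensive.
Import GRing.Theory Num.Theory Order.TTheory.
Local Open Scope ring_scope.

Section PermAgreement.
Variable T : finType.
Local Open Scope group_scope.
Implicit Types (P : {set T}) (s x y z : {perm T}).

Definition agree_on P x y := [forall p in P, y p == x p].

Lemma agree_onP P x y : reflect {in P, forall p, y p = x p} (agree_on P x y).
Proof. by apply: (iffP forall_inP) => [H p /H /eqP | H p /H ->]. Qed.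

Lemma agree_onU1 i P x y :
  agree_on (i |: P) x y = (y i == x i) && agree_on P x y.
Proof.
apply/agree_onP/andP => [H | [/eqP yi /agree_onP H] p].
  by split; [apply/eqP/H/setU11 | apply/agree_onP => p pP; apply/H/setU1r].
by case/setU1P => [-> // | /H].
Qed.

Lemma agree_on_set1 q x y : agree_on [set q] x y = (y q == x q).
Proof. by apply/agree_onP/eqP => [H | yq p /set1P ->]; [apply/H/set11 |]. Qed.

Lemma agree_on_set2 q p x y :
  agree_on [set q; p] x y = (y q == x q) && (y p == x p).
Proof. by rewrite agree_onU1 agree_on_set1. Qed.

Lemma eq_agree_on P x x' y :
  {in P, x =1 x'} -> agree_on P x y = agree_on P x' y.
Proof.
by move=> xx'; apply/agree_onP/agree_onP => H p pP; rewrite H ?xx'.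
Qed.

Lemma agree_on_mull P s x z :
  agree_on P x (s * z) = agree_on ((s^-1)%g @^-1: P) ((s^-1)%g * x) z.
Proof.
apply/agree_onP/agree_onP => H p.
  by rewrite inE => /H; rewrite !permM permKV => <-.
by move=> pP; rewrite permM H ?inE ?permK // permM permK.
Qed.

Lemma agree_on_setC1 i x y : agree_on [set~ i] x y = (y == x).
Proof.
apply/agree_onP/eqP => [H | -> //]; apply/permP => p.
have [-> {p} | ] := eqVneq p i; last by move=> pi; rewrite H // !inE.
have [r yr] : exists r, y r = x i by exists ((y^-1)%g (x i)); rewrite permKV.
have [eri | ri] := eqVneq r i; first by rewrite -yr eri.
by move: yr; rewrite H ?inE // => /perm_inj xri; rewrite xri eqxx in ri.
Qed.

Lemma card_agree_on P x : #|[pred y | agree_on P x y]| = (#|~: P|)`!.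
Proof.
rewrite -card_perm -(card_imset _ (mulIg x^-1)); apply: eq_card => u.
apply/imsetP/idP => [[y /agree_onP H ->] | uP].
  apply/fintype.subsetP => p; apply: contraTT.
  by rewrite !inE !negbK => pP; rewrite permM H // permK.
have uE p : p \in P -> u p = p by move=> pP; apply: out_perm uP _; rewrite inE negbK.
by exists (u * x); rewrite ?mulgK //; apply/agree_onP => p pP; rewrite permM uE.
Qed.

Lemma card_perm_val q b : #|[pred y : {perm T} | y q == b]| = (#|T|.-1)`!.
Proof.
rewrite -(cardsC1 q) -(card_agree_on _ (tperm q b)); apply: eq_card => y.
by rewrite !inE agree_on_set1 tpermL.
Qed.

Lemma card_perm_val2 q p b a : p != q -> a != b ->
  #|[pred y : {perm T} | (y q == b) && (y p == a)]| = (#|T|.-2)`!.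
Proof.
move=> pq ab; set x := tperm q b * tperm (tperm q b p) a.
have pb : tperm q b p != b by rewrite -{2}(tpermL q b) (inj_eq perm_inj).
have xq : x q = b by rewrite permM tpermL tpermD.
have xp : x p = a by rewrite permM tpermL.
have cardC : #|~: [set q; p]| = #|T|.-2.
  by have := cardsC [set q; p]; rewrite cards2 eq_sym pq; lia.
rewrite -cardC -(card_agree_on _ x); apply: eq_card => y.
by rewrite !inE agree_on_set2 xq xp.
Qed.

Lemma preimset_tperm_id (A : {set T}) i j :
  (i \in A) = (j \in A) -> tperm i j @^-1: A = A.
Proof.
by move=> ijA; apply/setP => q; rewrite inE; case: tpermP => [->|->|//].
Qed.

Lemma preimset_tperm_swap (A : {set T}) i j :
  i \notin A -> j \in A -> tperm i j @^-1: A = i |: A :\ j.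
Proof.
move=> iA jA; apply/setP => q; rewrite !inE.
have ji : (j == i) = false by apply: contraNF iA => /eqP <-.
case: tpermP => [-> | -> | /eqP/negbTE qi /eqP/negbTE qj];
  by rewrite ?eqxx ?ji ?qi ?qj ?jA ?(negbTE iA).
Qed.

End PermAgreement.

Lemma sumr_const_pred (V : nmodType) (I : finType) (A : pred I) (c : V) :
  \sum_(i | A i) c = c *+ #|A|.
Proof. by rewrite -sumr_const. Qed.

Lemma sumr_predC1 (V : zmodType) (I : finType) (F : I -> V) i :
  \sum_j F j = 0 -> \sum_(j | j != i) F j = - F i.
Proof. by rewrite (bigD1 i) //= => /eqP; rewrite addrC addr_eq0 => /eqP. Qed.

Lemma maximum_principle (R : realFieldType) (T I : finType) (J : {pred I})
    (nb : I -> T -> T) (c : R) (psi : T -> R) :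
  #|J|%:R < c -> (forall x, c * psi x = \sum_(j in J) psi (nb j x)) ->
  forall x, psi x = 0.
Proof.
move=> Jc psiE x.
case: (@arg_maxP _ R T x predT (fun z => `|psi z|) isT) => y _ ymax.
have c0 : 0 < c by apply: le_lt_trans Jc.
have : c * `|psi y| <= #|J|%:R * `|psi y|.
  rewrite -[c in c * _]gtr0_norm // -normrM psiE.
  apply: le_trans (ler_norm_sum _ _ _) _.
  apply: le_trans (ler_sum _ (fun j _ => ymax (nb j y) isT)) _.
  by rewrite sumr_const mulr_natl.
rewrite -subr_le0 -mulrBl pmulr_rle0 ?subr_gt0 // => psiy0.
by apply/eqP; rewrite -normr_le0; apply: le_trans (ymax x isT) psiy0.
Qed.

Section StarMoves.
Variable n : nat.
Local Notation N := n.+1.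
Implicit Types (x y v : 'S_N).

Definition swap0 (j : 'I_N) x : 'S_N := (tperm ord0 j * x)%g.

Lemma swap0E j x p : swap0 j x p = x (tperm ord0 j p).
Proof. by rewrite permM. Qed.

Lemma swap0K j : involutive (swap0 j).
Proof. by move=> x; rewrite /swap0 mulgA tperm2 mul1g. Qed.

Lemma swap0_ord0 j x : swap0 j x ord0 = x j.
Proof. by rewrite swap0E tpermL. Qed.

Lemma swap0_injl x : injective (swap0^~ x).
Proof. by move=> j k /(congr1 (fun y => y ord0)); rewrite !swap0_ord0 => /perm_inj. Qed.

Lemma star_adj_swap0 x y : star_adj x y <-> exists2 j, j != ord0 & y = swap0 j x.
Proof.
split => [[i [j [i0 [ij ->]]]] | [j j0 ->]]; last by exists ord0, j; rewrite eq_sym.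
have i_ord0 : i = ord0 by apply: val_inj.
by rewrite i_ord0 in ij *; exists j; rewrite 1?eq_sym.
Qed.

Lemma sum_star_adj (V : nmodType) (F : 'S_N -> V) x :
  \sum_(y | `[< star_adj x y >]) F y = \sum_(j | j != ord0) F (swap0 j x).
Proof.
rewrite [RHS](eq_bigl (mem (predC1 ord0))) // -(big_imset _ (in2W (@swap0_injl x))).
apply: eq_bigl => y; apply/asboolP/imsetP => [/star_adj_swap0 [j j0 ->] | [j j0 ->]].
  by exists j.
by apply/star_adj_swap0; exists j.
Qed.

Lemma star_dist2_swap0 v j k : j != ord0 -> k != ord0 -> j != k ->
  star_dist2 v (swap0 k (swap0 j v)).
Proof.
move=> j0 k0 jk.
have wE : swap0 k (swap0 j v) ord0 = v k by rewrite swap0_ord0 swap0E tpermD // eq_sym.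
split; [|split].
- by move=> wv; move: wE; rewrite wv => /perm_inj kE; rewrite kE eqxx in k0.
- case/star_adj_swap0 => i _ wi; move: (wE); rewrite wi swap0_ord0 => /perm_inj ik.
  move: wi; rewrite ik => /(can_inj (swap0K k)) /(congr1 (fun y => y ord0)).
  by rewrite swap0_ord0 => /perm_inj jE; rewrite jE eqxx in j0.
- by exists (swap0 j v); split; apply/star_adj_swap0; [exists j | exists k].
Qed.

End StarMoves.

Section StarEigenfunctions.
Variable R : realFieldType.
Variable n : nat.
Local Notation N := n.+1.
Implicit Types (P : {set 'I_N}) (h : 'S_N -> R) (x v : 'S_N)
  (M : 'I_N -> 'I_N -> R).

Definition star_eig h :=
  forall x, (N%:R - 2) * h x = \sum_(j | j != ord0) h (swap0 j x).

Lemma star_eigB f g : star_eig f -> star_eig g -> star_eig (f \- g).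
Proof. by move=> Ef Eg x; rewrite mulrBr Ef Eg -sumrB. Qed.

Lemma sum_neq_ord0_const (c : R) : \sum_(j : 'I_N | j != ord0) c = c *+ n.
Proof. by rewrite sumr_const_pred cardC1 card_ord. Qed.

Lemma sum_swap0 (F : 'S_N -> R) j (A : pred 'S_N) :
  \sum_(y | A y) F (swap0 j y) = \sum_(z | A (swap0 j z)) F z.
Proof.
rewrite [RHS](reindex_inj (can_inj (swap0K j))) /=.
by apply: eq_bigl => y; rewrite swap0K.
Qed.

Lemma star_eig_sum_eq0 h : star_eig h -> \sum_x h x = 0.
Proof.
move=> E; have : (N%:R - 2) * \sum_x h x = n%:R * \sum_x h x.
  rewrite mulr_sumr (eq_bigr _ (fun x _ => E x)) exchange_big /=.
  rewrite (eq_bigr (fun _ => \sum_x h x)) => [|j _].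
    by rewrite sum_neq_ord0_const mulr_natl.
  by rewrite [RHS](reindex_inj (can_inj (swap0K j))).
move=> e; have -> : \sum_x h x = n%:R * \sum_x h x - (N%:R - 2) * \sum_x h x.
  by rewrite -natr1; ring.
by rewrite e subrr.
Qed.

Definition coset_sum h P x := \sum_(y | agree_on P x y) h y.

Lemma coset_sum_swap0 h P j x :
  \sum_(y | agree_on P x y) h (swap0 j y) =
  coset_sum h (tperm ord0 j @^-1: P) (swap0 j x).
Proof.
rewrite sum_swap0 /coset_sum; apply: eq_bigl => z.
by rewrite /swap0 agree_on_mull tpermV.
Qed.

Lemma coset_sum_eig h P x : star_eig h ->
  (N%:R - 2) * coset_sum h P x =
  \sum_(j | j != ord0) coset_sum h (tperm ord0 j @^-1: P) (swap0 j x).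
Proof.
move=> E; rewrite mulr_sumr (eq_bigr _ (fun y _ => E y)) exchange_big /=.
by apply: eq_bigr => j _; apply: coset_sum_swap0.
Qed.

Lemma coset_sum_swap0_outside h P j x : ord0 \in P -> j \notin P ->
  coset_sum h (tperm ord0 j @^-1: P) (swap0 j x) =
  \sum_(z | agree_on (P :\ ord0) x z && (z j == x ord0)) h z.
Proof.
move=> P0 jP; rewrite tpermC preimset_tperm_swap // /coset_sum.
apply: eq_bigl => z; rewrite agree_onU1 andbC swap0E tpermR; congr (_ && _).
apply: eq_agree_on => p; rewrite !inE => /andP[p0 pP].
have jp : j != p by apply: contraNneq jP => ->.
by rewrite swap0E tpermD // eq_sym.
Qed.

Lemma sum_coset_sum_outside h P x : ord0 \in P ->
  \sum_(j | (j != ord0) && (j \notin P))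
     coset_sum h (tperm ord0 j @^-1: P) (swap0 j x) =
  coset_sum h (P :\ ord0) x - coset_sum h P x.
Proof.
move=> P0.
(* Off position 0, z agrees with x on P, so the value x 0 sits either at 0 or
   outside P. *)
have cover z : agree_on (P :\ ord0) x z -> (z^-1)%g (x ord0) \notin P :\ ord0.
  move=> /agree_onP zx; apply/negP => pP; have := zx _ pP.
  by rewrite permKV => /perm_inj p0; move: pP; rewrite -p0 !inE eqxx.
rewrite [coset_sum h (P :\ ord0) x](partition_big
  (fun z : 'S_N => (z^-1)%g (x ord0)) (fun i => i \notin P :\ ord0) cover).
rewrite [in RHS](bigD1 ord0) ?inE ?eqxx //=.
have -> : \sum_(z | agree_on (P :\ ord0) x z && ((z^-1)%g (x ord0) == ord0)) h z
          = coset_sum h P x.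
  apply: eq_bigl => z; rewrite -[in agree_on P x z](finset.setD1K P0) agree_onU1 andbC.
  by rewrite (canF_eq (permKV z)) eq_sym.
rewrite [RHS]addrC addKr; apply: eq_big => [j | j /andP[_ jP]].
  by rewrite !inE; case: (j == ord0); rewrite ?andbT.
rewrite coset_sum_swap0_outside //; apply: eq_bigl => z.
by rewrite (canF_eq (permKV z)) eq_sym.
Qed.

Lemma coset_sum_setD0 h P x : star_eig h -> ord0 \in P ->
  (N%:R - 1) * coset_sum h P x - \sum_(j in P :\ ord0) coset_sum h P (swap0 j x)
  = coset_sum h (P :\ ord0) x.
Proof.
move=> E P0; have := @coset_sum_eig h P x E.
rewrite (bigID (fun j => j \in P)) /= sum_coset_sum_outside //.
have -> : \sum_(j | (j != ord0) && (j \in P))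
            coset_sum h (tperm ord0 j @^-1: P) (swap0 j x)
          = \sum_(j in P :\ ord0) coset_sum h P (swap0 j x).
  apply: eq_big => [j | j /andP[_ jP]]; first by rewrite !inE.
  by rewrite preimset_tperm_id // P0 jP.
move=> eig; rewrite (_ : N%:R - 1 = (N%:R - 2) + 1); last by ring.
by rewrite mulrDl eig; ring.
Qed.

Lemma card_outside_ord0 P : ord0 \notin P ->
  (#|[pred j | (j != ord0) && (j \notin P)]| + #|P|)%N = n.
Proof.
move=> P0; have /eqP := cardsC (ord0 |: P).
rewrite cardsU1 P0 card_ord add1n eqSS => /eqP cE; rewrite -[RHS]cE addnC.
by congr (_ + _)%N; apply: eq_card => j; rewrite !inE negb_or.
Qed.

Lemma coset_sum_add0 h P x : star_eig h -> ord0 \notin P ->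
  (#|P|%:R - 1) * coset_sum h P x =
  \sum_(j in P) coset_sum h (ord0 |: P :\ j) (swap0 j x).
Proof.
move=> E P0; have := @coset_sum_eig h P x E.
rewrite (bigID (fun j => j \in P)) /=.
have -> : \sum_(j | (j != ord0) && (j \in P))
            coset_sum h (tperm ord0 j @^-1: P) (swap0 j x)
          = \sum_(j in P) coset_sum h (ord0 |: P :\ j) (swap0 j x).
  apply: eq_big => [j | j /andP[_ jP]]; last by rewrite preimset_tperm_swap.
  by apply: andb_idl => jP; apply: contraNneq P0 => <-.
have -> : \sum_(j | (j != ord0) && (j \notin P))
            coset_sum h (tperm ord0 j @^-1: P) (swap0 j x)
          = (n%:R - #|P|%:R) * coset_sum h P x.
  rewrite -[X in X%:R - _](card_outside_ord0 P0) natrD addrK mulr_natl -sumr_const_pred.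
  apply: eq_bigr => j /andP[j0 jP].
  rewrite preimset_tperm_id ?(negbTE P0) ?(negbTE jP) //.
  apply: eq_bigl => z; apply: eq_agree_on => p pP.
  rewrite swap0E tpermD //; first by apply: contraNneq P0 => ->.
  by apply: contraNneq jP => ->.
move=> eig; apply: (addIr ((n%:R - #|P|%:R) * coset_sum h P x)).
by rewrite -eig -natr1; ring.
Qed.

Lemma coset_sum_eq0_setD0 h P : star_eig h -> ord0 \in P -> (#|P| < N)%N ->
  (forall x, coset_sum h (P :\ ord0) x = 0) -> forall x, coset_sum h P x = 0.
Proof.
move=> E P0 PN cs0.
apply: (maximum_principle (J := P :\ ord0) (nb := @swap0 n) (c := N%:R - 1)).
  by rewrite -natr1 addrK ltr_nat; move: PN; rewrite (cardsD1 ord0 P) P0.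
by move=> x; apply/eqP; rewrite -subr_eq0 coset_sum_setD0 ?cs0.
Qed.

Lemma coset_sum_eq0_add0 h P : star_eig h -> ord0 \notin P -> (1 < #|P|)%N ->
  (forall j x, j \in P -> coset_sum h (ord0 |: P :\ j) x = 0) ->
  forall x, coset_sum h P x = 0.
Proof.
move=> E P0 P1 cs0 x; have := coset_sum_add0 x E P0.
rewrite big1 => [|j jP]; last exact: cs0.
move/eqP; rewrite mulf_eq0 subr_eq0 => /orP[|/eqP //].
by rewrite pnatr_eq1 => /eqP P1'; rewrite P1' in P1.
Qed.

Definition marginal h p a := \sum_(y : 'S_N | y p == a) h y.

Lemma coset_sum_set1 h q x : coset_sum h [set q] x = marginal h q (x q).
Proof. by apply: eq_bigl => y; rewrite agree_on_set1. Qed.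

Lemma coset_sum_eq0 h : star_eig h ->
  (forall q a, q != ord0 -> marginal h q a = 0) ->
  forall P x, ord0 \notin P -> (0 < #|P| < N)%N -> coset_sum h P x = 0.
Proof.
move=> E marg0.
suff IH k P x : ord0 \notin P -> #|P| = k.+1 -> (k.+1 < N)%N -> coset_sum h P x = 0.
  by move=> P x P0 /andP[]; case cP: #|P| => [// | k] _; apply: IH.
elim: k P x => [|k IH] P x P0 cP PN.
  have /cards1P [q Pq] : #|P| == 1%N by rewrite cP.
  rewrite Pq coset_sum_set1 marg0 //; apply: contraNneq P0 => <-.
  by rewrite Pq set11.
apply: coset_sum_eq0_add0 => //; first by rewrite cP.
move=> j y jP.
have P0j : ord0 \notin P :\ j by rewrite in_setD1 (negbTE P0) andbF.
have cPj : #|P :\ j| = k.+1 by move: cP; rewrite (cardsD1 j P) jP add1n => -[].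
apply: coset_sum_eq0_setD0 => //; first exact: setU11.
  by rewrite cardsU1 P0j cPj.
by move=> z; rewrite setU1K //; apply: IH => //; apply: ltnW.
Qed.

Lemma star_eig_eq0 h : star_eig h -> (0 < n)%N ->
  (forall q a, q != ord0 -> marginal h q a = 0) -> forall x, h x = 0.
Proof.
move=> E n0 marg0 x.
have -> : h x = coset_sum h [set~ ord0] x.
  by rewrite /coset_sum (big_pred1 x) // => y; rewrite agree_on_setC1.
apply: coset_sum_eq0 => //; first by rewrite !inE eqxx.
by rewrite cardsC1 card_ord n0 ltnSn.
Qed.

Lemma marginalB (f g : 'S_N -> R) p a :
  marginal (f \- g) p a = marginal f p a - marginal g p a.
Proof. exact: sumrB. Qed.

Lemma sum_marginal_val h p : \sum_a marginal h p a = \sum_y h y.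
Proof. by rewrite [RHS](partition_big (fun y : 'S_N => y p) predT). Qed.

Lemma sum_marginal_pos h a : \sum_p marginal h p a = \sum_y h y.
Proof.
rewrite [RHS](partition_big (fun y : 'S_N => (y^-1)%g a) predT) //.
by apply: eq_bigr => p _; apply: eq_bigl => y; rewrite (canF_eq (permKV y)) eq_sym.
Qed.

Lemma marginal_ord0 h a : star_eig h -> (0 < n)%N -> marginal h ord0 a = 0.
Proof.
move=> E n0; have := coset_sum_setD0 (tperm ord0 a) E (set11 ord0).
rewrite finset.setDv big_set0 subr0 coset_sum_set1 tpermL.
have -> : coset_sum h finset.set0 (tperm ord0 a) = 0.
  by rewrite -(star_eig_sum_eq0 E); apply: eq_bigl => y; apply/agree_onP => p; rewrite inE.
move/eqP; rewrite mulf_eq0 -natr1 addrK pnatr_eq0 => /orP[/eqP n00 | /eqP //].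
by rewrite n00 in n0.
Qed.

Definition first_order M x := \sum_p M p (x p).

Lemma first_order_swap0 M x j : j != ord0 ->
  first_order M (swap0 j x) = first_order M x + M ord0 (x j) + M j (x ord0)
                              - M ord0 (x ord0) - M j (x j).
Proof.
move=> j0; rewrite /first_order (bigD1 ord0) // (bigD1 j) //=.
rewrite [in RHS](bigD1 ord0) // [in RHS](bigD1 j) //= swap0_ord0 swap0E tpermR.
rewrite (eq_bigr (fun p => M p (x p))); first by ring.
by move=> p /andP[pj p0]; rewrite swap0E tpermD // eq_sym.
Qed.

Lemma first_order_eig M : (forall a, M ord0 a = 0) ->
  (forall a, \sum_p M p a = 0) -> star_eig (first_order M).
Proof.
move=> M0 Mcol x.
rewrite (eq_bigr (fun j => first_order M x + M j (x ord0) - M j (x j))); last first.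
  by move=> j j0; rewrite first_order_swap0 // !M0; ring.
rewrite !big_split /= sumrN sum_neq_ord0_const sumr_predC1 // M0.
have -> : \sum_(j | j != ord0) M j (x j) = first_order M x.
  by rewrite /first_order [in RHS](bigD1 ord0) //= M0 add0r.
by rewrite -mulr_natr -natr1; ring.
Qed.

Lemma sum_perm_val_same (F : 'I_N -> R) q b :
  \sum_(y : 'S_N | y q == b) F (y q) = F b *+ n`!.
Proof.
rewrite (eq_bigr (fun=> F b)) => [|y /eqP -> //].
by rewrite sumr_const_pred card_perm_val card_ord.
Qed.

Lemma sum_perm_val_other (F : 'I_N -> R) q b p : p != q ->
  \sum_(y : 'S_N | y q == b) F (y p) = (\sum_(a | a != b) F a) *+ n.-1`!.
Proof.
move=> pq.
have cover (y : 'S_N) : y q == b -> y p != b.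
  by move=> /eqP <-; rewrite (inj_eq perm_inj).
rewrite (partition_big (fun y : 'S_N => y p) (fun a => a != b) cover) -sumrMnl.
apply: eq_bigr => a ab; rewrite (eq_bigr (fun=> F a)) => [|y /andP[_ /eqP -> //]].
by rewrite sumr_const_pred card_perm_val2 // card_ord.
Qed.

Lemma marginal_first_order M q b :
  (forall p, \sum_a M p a = 0) -> (forall a, \sum_p M p a = 0) ->
  marginal (first_order M) q b = M q b *+ (n`! + n.-1`!).
Proof.
move=> Mrow Mcol; rewrite /marginal /first_order exchange_big (bigD1 q) //=.
rewrite sum_perm_val_same (eq_bigr (fun p => - M p b *+ n.-1`!)) => [|p pq].
  by rewrite sumrMnl sumrN sumr_predC1 // opprK mulrnDr.
by rewrite sum_perm_val_other // sumr_predC1.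
Qed.

Lemma star_eig_first_order h : star_eig h -> (0 < n)%N ->
  h =1 first_order (fun p a => marginal h p a / (n`! + n.-1`!)%:R).
Proof.
move=> E n0; set D : R := (n`! + n.-1`!)%:R.
set M := fun p a => marginal h p a / D.
have D0 : D != 0 by rewrite pnatr_eq0 addn_eq0 negb_and -lt0n fact_gt0.
have Mrow p : \sum_a M p a = 0.
  by rewrite -mulr_suml sum_marginal_val star_eig_sum_eq0 // mul0r.
have Mcol a : \sum_p M p a = 0.
  by rewrite -mulr_suml sum_marginal_pos star_eig_sum_eq0 // mul0r.
have M0 a : M ord0 a = 0 by rewrite /M marginal_ord0 // mul0r.
move=> x; apply/eqP; rewrite -subr_eq0; apply/eqP.
apply: (star_eig_eq0 (star_eigB E (first_order_eig M0 Mcol)) n0) => q a _.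
by rewrite marginalB marginal_first_order // -mulr_natr /M divfK // subrr.
Qed.

Lemma first_order_eq0 M v : first_order M v = 0 ->
  (forall j, j != ord0 -> first_order M (swap0 j v) = 0) ->
  (forall j k, j != ord0 -> k != ord0 -> j != k ->
     first_order M (swap0 k (swap0 j v)) = 0) ->
  forall x, first_order M x = 0.
Proof.
move=> Mv Mnbr Mdist2.
have key p b : M p (v b) - M p (v p) = M ord0 (v b) - M ord0 (v p).
  have [-> // | p0] := eqVneq p ord0.
  have [-> | bp] := eqVneq b p; first by rewrite !subrr.
  have [-> | b0] := eqVneq b ord0.
    by move: (Mnbr p p0); rewrite first_order_swap0 // Mv => e; lra.
  have p0' : ord0 != p by rewrite eq_sym.
  move: (Mdist2 b p b0 p0 bp).
  by rewrite first_order_swap0 // Mnbr // swap0_ord0 swap0E tpermD // => e; lra.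
have perm_sum (y : 'S_N) : \sum_p M ord0 (y p) = \sum_p M ord0 p.
  by rewrite [RHS](reindex_inj (@perm_inj _ y)).
move=> x; transitivity (first_order M x - first_order M v); first by rewrite Mv subr0.
rewrite /first_order -sumrB (eq_bigr (fun p => M ord0 (x p) - M ord0 (v p))).
  by rewrite sumrB !perm_sum subrr.
by move=> p _; have := key p ((v^-1)%g (x p)); rewrite permKV.
Qed.

Lemma natr_sqr_sub1_neq (k : nat) : (k%:R - 1) ^+ 2 != k%:R :> R.
Proof.
have -> : (k%:R - 1) ^+ 2 = (k * k + 1)%N%:R - (2 * k)%N%:R :> R.
  by rewrite natrD !natrM; ring.
rewrite subr_eq -natrD eqr_nat; case: k => [|[|[|k]]] //; apply/eqP; nia.
Qed.

Lemma star_eig_eq0_near h v : (1 < n)%N -> star_eig h ->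
  (forall j k, j != ord0 -> k != ord0 -> j != k -> h (swap0 k (swap0 j v)) = 0) ->
  h v = 0 /\ forall j, j != ord0 -> h (swap0 j v) = 0.
Proof.
move=> n1 E hdist2; set th : R := N%:R - 2.
have th0 : th != 0.
  have : 2 <= n%:R :> R by rewrite ler_nat.
  rewrite /th -natr1; lra.
have hnbr j : j != ord0 -> th * h (swap0 j v) = h v.
  move=> j0; rewrite E (bigD1 j) //= swap0K big1 ?addr0 // => i /andP[i0 ij].
  by apply: hdist2; rewrite // eq_sym.
have hv : h v = 0.
  have : th * (th * h v) = n%:R * h v.
    rewrite E mulr_sumr (eq_bigr (fun _ => h v)) => [|j j0]; last exact: hnbr.
    by rewrite sum_neq_ord0_const mulr_natl.
  move/eqP; rewrite mulrA -subr_eq0 -mulrBl mulf_eq0 => /orP[|/eqP //].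
  have -> : th * th = (n%:R - 1) ^+ 2 by rewrite /th -natr1; ring.
  by rewrite subr_eq0 (negbTE (natr_sqr_sub1_neq n)).
split=> // j j0; have /eqP := hnbr j j0.
by rewrite hv mulf_eq0 (negbTE th0) => /eqP.
Qed.

Lemma star_eig_eq0_of_dist2 h v : (1 < n)%N -> star_eig h ->
  (forall j k, j != ord0 -> k != ord0 -> j != k -> h (swap0 k (swap0 j v)) = 0) ->
  forall x, h x = 0.
Proof.
move=> n1 E hdist2 x; have [hv hnbr] := star_eig_eq0_near n1 E hdist2.
have hE := star_eig_first_order E (ltnW n1).
rewrite hE; apply: (first_order_eq0 (v := v)) => [| j j0 | j k j0 k0 jk];
  by rewrite -hE ?hnbr ?hdist2.
Qed.

End StarEigenfunctions.

Lemma star_eigenfunction_eig (R : realType) n (h : 'S_n.+1 -> R) :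
  star_eigenfunction (n.+1%:R - 2) h -> star_eig h.
Proof. by move=> [_ Eh] x; rewrite Eh sum_star_adj. Qed.

Theorem theorem2 (R : realType) (n : nat) (hn : (3 <= n)%N)
    (f g : 'S_n -> R) (v : 'S_n) :
  star_eigenfunction (n%:R - 2) f ->
  star_eigenfunction (n%:R - 2) g ->
  (forall x : 'S_n, star_dist2 v x -> f x = g x) ->
  f = g.
Proof.
case: n hn f g v => // n hn f g v /star_eigenfunction_eig Ef
  /star_eigenfunction_eig Eg fg.
apply/funext => x; apply/eqP; rewrite -subr_eq0; apply/eqP.
apply: (star_eig_eq0_of_dist2 hn (star_eigB Ef Eg)) => j k j0 k0 jk.
by rewrite /= fg ?subrr //; apply: star_dist2_swap0.
Qed.
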